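(* Let $d\ge 2$, let $P\subset\mathbb{R}^d$ be a generic convex simplicial $d$-dimensional polytope, and let $P'\subset\mathbb{R}^{d+1}$ be its lifting. Let $P_+$ be the intersection, over all facets $F$ of $P'$, of the closed upper half-spaces bounded by $\mathrm{aff}(F)$, and let $T_+$ be the intersection, over all facets $F$ of $P'$, of the closed upper half-spaces bounded by the hyperplane through the origin parallel to $\mathrm{aff}(F)$. Then for each facet of $T_+$ there is an unbounded facet of $P_+$ parallel to it.
   Context: $P$ is generic if no $d+2$ of its vertices lie on a common $(d-1)$-dimensional sphere and $P$ is not a $d$-simplex. With $V$ the vertex set of $P$ and $f(x_1,\dots,x_d)=(x_1,\dots,x_d,x_1^2+\dots+x_d^2)$, the lifting $P'$ is the convex hull of $f(V)$ in $\mathbb{R}^{d+1}$; it is a $(d+1)$-dimensional simplicial polytope none of whose facet hyperplanes is vertical (i.e. every facet normal has nonzero last coordinate). For a non-vertical hyperplane $H$ in $\mathbb{R}^{d+1}$, its closed upper half-space is the set of points lying on or above $H$ with respect to the last coordinate. *)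

From HB Require Import structures.
From mathcomp Require Import all_boot all_order all_algebra.
From mathcomp Require Import classical_sets reals.
Set Implicit Arguments. Unset Strict Implicit. Unset Printing Implicit Defensive.
Import Order.TTheory GRing.Theory Num.Theory.
Local Open Scope ring_scope.
Local Open Scope classical_set_scope.

Section Geom.
Variable R : realType.

Definition dotp (n : nat) (x y : 'rV[R]_n) : R := \sum_(i < n) x 0 i * y 0 i.

Definition aff (n : nat) (S : set 'rV[R]_n) : set 'rV[R]_n :=
  [set x | exists (k : nat) (p : 'I_k -> 'rV[R]_n) (w : 'I_k -> R),
     (forall i, S (p i)) /\ \sum_(i < k) w i = 1 /\ x = \sum_(i < k) w i *: p i].

Definition conv (n : nat) (S : set 'rV[R]_n) : set 'rV[R]_n :=
  [set x | exists (k : nat) (p : 'I_k -> 'rV[R]_n) (w : 'I_k -> R),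
     (forall i, S (p i)) /\ (forall i, 0 <= w i) /\
     \sum_(i < k) w i = 1 /\ x = \sum_(i < k) w i *: p i].

Definition aff_indep (n k : nat) (p : 'I_k -> 'rV[R]_n) : Prop :=
  forall w : 'I_k -> R, \sum_(i < k) w i = 0 -> \sum_(i < k) w i *: p i = 0 ->
    forall i, w i = 0.

Definition affdim (n : nat) (S : set 'rV[R]_n) (k : nat) : Prop :=
  (exists p : 'I_k.+1 -> 'rV[R]_n, (forall i, S (p i)) /\ aff_indep p) /\
  ~ (exists p : 'I_k.+2 -> 'rV[R]_n, (forall i, S (p i)) /\ aff_indep p).

Definition facet (n : nat) (K F : set 'rV[R]_n) : Prop :=
  (exists (a : 'rV[R]_n) (b : R), a != 0 /\
     (forall x, K x -> dotp a x <= b) /\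
     F = [set x | K x /\ dotp a x = b]) /\
  exists k : nat, affdim K k.+1 /\ affdim F k.

Definition bounded_set (n : nat) (S : set 'rV[R]_n) : Prop :=
  exists M : R, forall x, S x -> forall i, `|x 0 i| <= M.

Definition lin_part (n : nat) (A : set 'rV[R]_n) : set 'rV[R]_n :=
  [set v | exists y z, A y /\ A z /\ v = y - z].

(* closed upper half-space bounded by a (non-vertical) hyperplane H in
   R^(d+1): points lying on or above H w.r.t. the last coordinate *)
Definition upper_half (d : nat) (H : set 'rV[R]_(d + 1)) : set 'rV[R]_(d + 1) :=
  [set x | exists y, H y /\ lsubmx y = lsubmx x /\ rsubmx y 0 0 <= rsubmx x 0 0].

Definition liftmap (d : nat) (x : 'rV[R]_d) : 'rV[R]_(d + 1) :=
  row_mx x (\row_(i < 1) dotp x x).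

Definition is_vertex_set (d : nat) (V : seq 'rV[R]_d) : Prop :=
  uniq V /\
  (forall v, v \in V -> ~ conv [set w | w \in V /\ w != v] v) /\
  affdim (conv [set v | v \in V]) d.

Definition simplicial (d : nat) (V : seq 'rV[R]_d) : Prop :=
  forall F, facet (conv [set v | v \in V]) F ->
  forall (k : nat) (p : 'I_k -> 'rV[R]_d), injective p ->
    (forall i, p i \in V /\ F (p i)) -> aff_indep p.

(* generic: no d+2 vertices on a common (d-1)-sphere, and P not a d-simplex *)
Definition generic (d : nat) (V : seq 'rV[R]_d) : Prop :=
  (forall p : 'I_(d.+2) -> 'rV[R]_d, injective p -> (forall i, p i \in V) ->
     ~ exists (c : 'rV[R]_d) (r : R), 0 < r /\
         forall i, dotp (p i - c) (p i - c) = r ^+ 2) /\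
  size V != d.+1.

Definition lifting (d : nat) (V : seq 'rV[R]_d) : set 'rV[R]_(d + 1) :=
  conv [set y | exists v, v \in V /\ y = liftmap v].

Definition Pplus (d : nat) (V : seq 'rV[R]_d) : set 'rV[R]_(d + 1) :=
  [set x | forall F, facet (lifting V) F -> upper_half (aff F) x].

Definition Tplus (d : nat) (V : seq 'rV[R]_d) : set 'rV[R]_(d + 1) :=
  [set x | forall F, facet (lifting V) F -> upper_half (lin_part (aff F)) x].

End Geom.

From mathcomp Require Import all_boot all_order all_algebra.
From mathcomp Require Import classical_sets reals boolp.
From mathcomp Require Import ring lra.
Set Implicit Arguments. Unset Strict Implicit. Unset Printing Implicit Defensive.
Import Order.TTheory GRing.Theory Num.Theory.
Local Open Scope ring_scope.
Local Open Scope classical_set_scope.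

(* Write the constraints of [Pplus] as [N_F . x <= e_F], one for each facet
   [F] of the lifting, normalized so that the last coordinate of [N_F] is -1.
   This is possible because no facet of the lifting is vertical: genericity
   makes the lifting full-dimensional, and a vertical facet would project onto
   a facet of [conv V] carrying [d + 1] affinely independent vertices, against
   simpliciality. Then [Tplus] is the cone [N_F . x <= 0]. Let [E] be a facet
   of this cone, spanned by affinely independent points with barycenter [c].
   Some constraint is tight at [c], and every tight constraint has the normal
   of [E]; pick the tight one with the smallest [e_F]. A point of its
   hyperplane moved far enough along [c] satisfies all other constraints, so
   that hyperplane cuts out a facet of [Pplus] containing a translate of the
   cone [E]: an unbounded facet parallel to [E]. *)

Lemma card_inj_seq (T : eqType) m (r : 'I_m -> T) (s : seq T) :
  injective r -> (forall i, r i \in s) -> (m <= size s)%N.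
Proof.
move=> rinj rs; rewrite -[m]card_ord -(size_codom r) uniq_leq_size //.
  by rewrite codomE map_inj_uniq ?enum_uniq.
by move=> _ /codomP [i ->].
Qed.

Lemma le_sum_norm (R : realDomainType) (I : finType) (P : pred I) (f : I -> R) i :
  P i -> f i <= \sum_(j | P j) `|f j|.
Proof.
move=> Pi; rewrite (bigD1 i) //=; apply: (le_trans (ler_norm _)).
by rewrite lerDl sumr_ge0.
Qed.

Section DotProduct.
Variables (R : realType) (n : nat).
Implicit Types (a b x y : 'rV[R]_n).

Lemma dotpC a x : dotp a x = dotp x a.
Proof. by apply: eq_bigr => i _; rewrite mulrC. Qed.

Lemma dotpDr a x y : dotp a (x + y) = dotp a x + dotp a y.
Proof. by rewrite /dotp -big_split; apply: eq_bigr => i _; rewrite mxE mulrDr. Qed.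

Lemma dotpZr a x c : dotp a (c *: x) = c * dotp a x.
Proof. by rewrite /dotp mulr_sumr; apply: eq_bigr => i _; rewrite mxE mulrCA. Qed.

Lemma dotpBr a x y : dotp a (x - y) = dotp a x - dotp a y.
Proof. by rewrite dotpDr -scaleN1r dotpZr mulN1r. Qed.

Lemma dotp0r a : dotp a 0 = 0.
Proof. by rewrite -(scale0r 0) dotpZr mul0r. Qed.

Lemma dotp_sumr a k (f : 'I_k -> 'rV[R]_n) :
  dotp a (\sum_(i < k) f i) = \sum_(i < k) dotp a (f i).
Proof.
rewrite /dotp exchange_big /=; apply: eq_bigr => j _.
by rewrite summxE mulr_sumr.
Qed.

Lemma dotp_sumZr a k (w : 'I_k -> R) (f : 'I_k -> 'rV[R]_n) :
  dotp a (\sum_(i < k) w i *: f i) = \sum_(i < k) w i * dotp a (f i).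
Proof. by rewrite dotp_sumr; apply: eq_bigr => i _; rewrite dotpZr. Qed.

Lemma dotpZl a x c : dotp (c *: a) x = c * dotp a x.
Proof. by rewrite dotpC dotpZr dotpC. Qed.

Lemma dotpBl a b x : dotp (a - b) x = dotp a x - dotp b x.
Proof. by rewrite dotpC dotpBr !(dotpC x). Qed.

Lemma dotpp_ge0 x : 0 <= dotp x x.
Proof. by apply: sumr_ge0 => i _; rewrite -expr2 sqr_ge0. Qed.

Lemma dotpp_eq0 x : (dotp x x == 0) = (x == 0).
Proof.
apply/idP/eqP => [|->]; last by rewrite dotp0r.
rewrite /dotp psumr_eq0 => [/allP x0|i _]; last by rewrite -expr2 sqr_ge0.
apply/rowP => j; rewrite mxE; apply/eqP.
by have := x0 j (mem_index_enum j); rewrite implyTb mulf_eq0 orbb.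
Qed.

Lemma dotpp_gt0 x : (0 < dotp x x) = (x != 0).
Proof. by rewrite lt_def dotpp_ge0 dotpp_eq0 andbT. Qed.

Lemma dotp_delta a i : dotp a (delta_mx 0 i) = a 0 i.
Proof.
rewrite /dotp (bigD1 i) //= big1 => [|j ji]; first by rewrite !mxE !eqxx mulr1 addr0.
by rewrite !mxE (negbTE ji) andbF mulr0.
Qed.

Lemma dotp_sqrB x c : dotp (x - c) (x - c) = dotp x x - 2 * dotp c x + dotp c c.
Proof. by rewrite dotpBl !dotpBr (dotpC x c); ring. Qed.

Lemma orthogonal_parallel a N : a != 0 ->
  (forall v, dotp a v = 0 -> dotp N v = 0) -> N = (dotp N a / dotp a a) *: a.
Proof.
move=> a0 aN; set l := dotp N a / dotp a a.
have aa0 : dotp a a != 0 by rewrite dotpp_eq0.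
have a_perp : dotp a (N - l *: a) = 0.
  by rewrite dotpBr dotpZr (dotpC a N) /l divfK // subrr.
apply/eqP; rewrite -subr_eq0 -dotpp_eq0.
by rewrite {1}dotpBl aN // sub0r dotpZl a_perp mulr0 oppr0.
Qed.

End DotProduct.

Section Hulls.
Variables (R : realType) (n : nat).
Implicit Types (S : set 'rV[R]_n) (a x : 'rV[R]_n).

Lemma sub_conv S x : S x -> conv S x.
Proof.
move=> Sx; exists 1%N, (fun=> x), (fun=> 1).
by rewrite !big_ord1 scale1r.
Qed.

Lemma conv_sub_aff S x : conv S x -> aff S x.
Proof. by case=> k [p [w [Sp [_ [w1 ->]]]]]; exists k, p, w. Qed.

Lemma conv_mono S S' x : S `<=` S' -> conv S x -> conv S' x.
Proof. by move=> SS' [k [p [w [Sp pw]]]]; exists k, p, w; split=> // i; apply: SS'. Qed.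

Lemma aff_dotp S a b x :
  (forall y, S y -> dotp a y = b) -> aff S x -> dotp a x = b.
Proof.
move=> Sab [k [p [w [Sp [w1 ->]]]]]; rewrite dotp_sumZr.
by under eq_bigr do rewrite Sab //; rewrite -mulr_suml w1 mul1r.
Qed.

Lemma conv_dotp_le S a b x :
  (forall y, S y -> dotp a y <= b) -> conv S x -> dotp a x <= b.
Proof.
move=> Sab [k [p [w [Sp [w0 [w1 ->]]]]]]; rewrite dotp_sumZr.
apply: (@le_trans _ _ (\sum_(i < k) w i * b)); last by rewrite -mulr_suml w1 mul1r.
by apply: ler_sum => i _; apply: ler_wpM2l => //; apply: Sab.
Qed.

Lemma aff_sub_span S o r (B : 'M[R]_(r, n)) x :
  (forall y, S y -> (y - o <= B)%MS) -> aff S x -> (x - o <= B)%MS.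
Proof.
move=> SB [k [p [w [Sp [w1 ->]]]]].
have -> : \sum_(i < k) w i *: p i - o = \sum_(i < k) w i *: (p i - o).
  by under [RHS]eq_bigr do rewrite scalerBr; rewrite sumrB -scaler_suml w1 scale1r.
by apply: summx_sub => i _; apply: scalemx_sub; apply: SB.
Qed.

Lemma aff_empty S x : (forall y, ~ S y) -> ~ aff S x.
Proof.
move=> S0 [[|k] [p [w [Sp [w1 _]]]]]; last exact: S0 _ (Sp ord0).
by move: w1; rewrite big_ord0 => /eqP; rewrite eq_sym oner_eq0.
Qed.

Lemma conv_face S a b :
  (forall y, S y -> dotp a y <= b) ->
  [set x | conv S x /\ dotp a x = b] = conv [set y | S y /\ dotp a y = b].
Proof.
move=> Sab; apply/seteqP; split=> x /=; last first.
  move=> x_conv; split; first by apply: conv_mono x_conv => y [].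
  by apply: aff_dotp (conv_sub_aff x_conv) => y [].
case=> -[k [p [w [Sp [w0 [w1 xE]]]]]] axb.
have tight i : w i != 0 -> dotp a (p i) = b.
  have slack0 : \sum_(i < k) w i * (b - dotp a (p i)) = 0.
    under eq_bigr do rewrite mulrBr.
    by rewrite sumrB -mulr_suml w1 mul1r -dotp_sumZr -xE axb subrr.
  move=> wi0; apply/eqP; rewrite eq_sym -subr_eq0; move/eqP: slack0.
  rewrite psumr_eq0 => [/allP/(_ i (mem_index_enum i))|j _].
    by rewrite implyTb mulf_eq0 (negbTE wi0).
  by rewrite mulr_ge0 ?subr_ge0 ?Sab.
have [j0 wj0] : exists j, w j != 0.
  apply/existsP; apply: contraT => /existsPn w_eq0; move: w1.
  rewrite big1 => [/eqP|j _]; first by rewrite eq_sym oner_eq0.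
  by apply/eqP; rewrite -[_ == _]negbK w_eq0.
exists k, (fun i => if dotp a (p i) == b then p i else p j0), w.
split; first by move=> i /=; case: ifP => [/eqP api|_]; split=> //; exact: tight.
do 2 split=> //; rewrite xE; apply: eq_bigr => i _; case: ifP => // /negbT ab.
suff -> : w i = 0 by rewrite !scale0r.
by apply/eqP; apply: contraR ab => /tight ->.
Qed.

End Hulls.

Definition extend (T : Type) k (q : 'I_k -> T) (u : T) (i : 'I_k.+1) : T :=
  if unlift ord_max i is Some j then q j else u.

Lemma extend_widen (T : Type) k (q : 'I_k -> T) u i :
  extend q u (widen_ord (leqnSn k) i) = q i.
Proof.
have -> : widen_ord (leqnSn k) i = lift ord_max i by apply: val_inj; exact: esym (lift_max i).
by rewrite /extend liftK.
Qed.

Lemma extend_max (T : Type) k (q : 'I_k -> T) u : extend q u ord_max = u.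
Proof. by rewrite /extend unlift_none. Qed.

Lemma extend_inj (T : eqType) k (q : 'I_k -> T) u :
  injective q -> (forall i, q i != u) -> injective (extend q u).
Proof.
move=> qinj qu i j; rewrite /extend.
case: (unliftP ord_max i) => [i' ->|->]; case: (unliftP ord_max j) => [j' ->|->] //.
- by move/qinj ->.
- by move=> qiu; have := qu i'; rewrite qiu eqxx.
- by move=> uqj; have := qu j'; rewrite uqj eqxx.
Qed.

Section AffineIndependence.
Variables (R : realType) (n : nat).

Definition diffmx j (q : 'I_j.+1 -> 'rV[R]_n) : 'M[R]_(j, n) :=
  \matrix_(i < j) (q (lift ord0 i) - q ord0).

Lemma diffmx_mul j (q : 'I_j.+1 -> 'rV[R]_n) (u : 'rV[R]_j) :
  u *m diffmx q = \sum_(i < j) u 0 i *: q (lift ord0 i) - (\sum_(i < j) u 0 i) *: q ord0.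
Proof.
rewrite mulmx_sum_row scaler_suml -sumrB; apply: eq_bigr => i _.
by rewrite rowK scalerBr.
Qed.

(* Affine dependences of [q] are the left kernel vectors of [diffmx q],
   completed by giving [q ord0] minus the sum of the other weights. *)
Lemma affindep_row_free j (q : 'I_j.+1 -> 'rV[R]_n) :
  aff_indep q <-> row_free (diffmx q).
Proof.
split=> [qI | qfree w w_sum w_comb l].
  rewrite -kermx_eq0; apply/eqP/row_matrixP => r; rewrite row0.
  set u := row r (kermx (diffmx q)).
  have uq : u *m diffmx q = 0 by rewrite /u -row_mul mulmx_ker row0.
  pose w l := if unlift ord0 l is Some i then u 0 i else - \sum_(i < j) u 0 i.
  have wl i : w (lift ord0 i) = u 0 i by rewrite /w liftK.
  have w0 : w ord0 = - \sum_(i < j) u 0 i by rewrite /w unlift_none.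
  have w_sum : \sum_(l < j.+1) w l = 0.
    by rewrite big_ord_recl w0 (eq_bigr _ (fun i _ => wl i)) addNr.
  have w_comb : \sum_(l < j.+1) w l *: q l = 0.
    rewrite big_ord_recl w0 (eq_bigr (fun i => u 0 i *: q (lift ord0 i))).
      by rewrite addrC scaleNr -diffmx_mul.
    by move=> i _; rewrite wl.
  by apply/rowP => i; rewrite -wl (qI w w_sum w_comb) mxE.
pose u : 'rV[R]_j := \row_i w (lift ord0 i).
have u_sum : \sum_(i < j) w (lift ord0 i) = - w ord0.
  by apply/eqP; rewrite -addr_eq0 addrC; move: w_sum; rewrite big_ord_recl => ->.
have : u *m diffmx q = 0 *m diffmx q.
  rewrite mul0mx diffmx_mul.
  under eq_bigr do rewrite mxE.
  under [\sum_(i < j) u 0 i]eq_bigr do rewrite mxE.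
  by rewrite u_sum scaleNr opprK addrC; move: w_comb; rewrite big_ord_recl.
move/(row_free_inj qfree)/rowP => u0.
case: (unliftP ord0 l) => [i ->|->]; first by have := u0 i; rewrite !mxE.
by apply/eqP; rewrite -oppr_eq0 -u_sum; apply/eqP/big1 => i _; have := u0 i; rewrite !mxE.
Qed.

Lemma affindep_rank m (q : 'I_m -> 'rV[R]_n) o r (B : 'M[R]_(r, n)) :
  aff_indep q -> (forall i, (q i - o <= B)%MS) -> (m <= (\rank B).+1)%N.
Proof.
case: m q => [//|j] q /affindep_row_free/eqP qrank qB.
rewrite ltnS -qrank; apply: mxrankS; apply/row_subP => i; rewrite rowK.
have -> : q (lift ord0 i) - q ord0 = (q (lift ord0 i) - o) - (q ord0 - o).
  by rewrite opprB addrA subrK.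
by rewrite addmx_sub // -scaleN1r scalemx_sub.
Qed.

Lemma affindep_card m (q : 'I_m -> 'rV[R]_n) : aff_indep q -> (m <= n.+1)%N.
Proof.
move=> qI; have := affindep_rank (o := 0) (B := 1%:M : 'M[R]_n) qI.
by rewrite mxrank1; apply=> i; rewrite submx1.
Qed.

Lemma dotp_kermx (a x : 'rV[R]_n) : (x <= kermx a^T)%MS = (dotp a x == 0).
Proof.
have ax : (x *m a^T) 0 0 = dotp a x.
  by rewrite mxE dotpC; apply: eq_bigr => k _; rewrite mxE.
apply/sub_kermxP/eqP => [xa0|ax0]; first by rewrite -ax xa0 mxE.
by apply/rowP => i; rewrite ord1 ax ax0 mxE.
Qed.

Lemma rank_kermx_tr (a : 'rV[R]_n) : a != 0 -> \rank (kermx a^T) = n.-1.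
Proof.
move=> a0; rewrite mxrank_ker mxrank_tr.
suff -> : \rank a = 1%N by rewrite subn1.
by apply/eqP; rewrite eqn_leq rank_leq_row lt0n mxrank_eq0 a0.
Qed.

Lemma affindep_hyperplane_card m (q : 'I_m -> 'rV[R]_n) a b :
  a != 0 -> aff_indep q -> (forall i, dotp a (q i) = b) -> (m <= n)%N.
Proof.
case: m q => [//|j] q a0 qI qab.
have n0 : (0 < n)%N.
  rewrite lt0n; apply: contraNneq a0 => n0.
  by apply/eqP/rowP => i; have := ltn_ord i; rewrite {2}n0.
rewrite -(prednK n0) -(rank_kermx_tr a0).
apply: (affindep_rank (o := q ord0)) qI _ => i.
by rewrite dotp_kermx dotpBr !qab subrr.
Qed.

Lemma affindep_hyperplane_span j (q : 'I_j.+1 -> 'rV[R]_n) a b y :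
  a != 0 -> aff_indep q -> (forall i, dotp a (q i) = b) -> j.+1 = n ->
  dotp a y = b -> aff (range q) y.
Proof.
move=> a0 qI qab jn ayb.
have q_ker : (diffmx q <= kermx a^T)%MS.
  by apply/row_subP => i; rewrite rowK dotp_kermx dotpBr !qab subrr.
have : (kermx a^T <= diffmx q)%MS.
  rewrite -(mxrank_leqif_sup q_ker) rank_kermx_tr //.
  by have /affindep_row_free/eqP -> := qI; rewrite -jn.
move/(submx_trans (_ : (y - q ord0 <= kermx a^T)%MS)).
rewrite dotp_kermx dotpBr ayb qab subrr eqxx.
case/(_ isT)/submxP => c /eqP; rewrite diffmx_mul subr_eq => /eqP ->.
pose w l := if unlift ord0 l is Some i then c 0 i else 1 - \sum_(i < j) c 0 i.
have wl (i : 'I_j) : w (lift ord0 i) = c 0 i by rewrite /w liftK.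
have w0 : w ord0 = 1 - \sum_(i < j) c 0 i by rewrite /w unlift_none.
exists j.+1, q, w; split; first by move=> i; exists i.
split; first by rewrite big_ord_recl w0 (eq_bigr _ (fun i _ => wl i)) subrK.
rewrite big_ord_recl w0 scalerBl scale1r [in RHS](eq_bigr (fun i => c 0 i *: q (lift ord0 i))).
  by rewrite [RHS]addrC addrA addrAC.
by move=> i _; rewrite wl.
Qed.

Lemma affindep_widen m m' (le_m'm : (m' <= m)%N) (q : 'I_m -> 'rV[R]_n) :
  aff_indep q -> aff_indep (fun i : 'I_m' => q (widen_ord le_m'm i)).
Proof.
move=> qI w w_sum w_comb i.
pose W (l : 'I_m) := if insub (val l) is Some i then w i else 0.
have Ww i' : W (widen_ord le_m'm i') = w i' by rewrite /W /= valK.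
have W0 (l : 'I_m) : ~~ (l < m')%N -> W l = 0 by move=> lm; rewrite /W insubF //; apply/negbTE.
have sumW (V : zmodType) (F : 'I_m -> V) : (forall l : 'I_m, ~~ (l < m')%N -> F l = 0) ->
    \sum_(l < m) F l = \sum_(i < m') F (widen_ord le_m'm i).
  move=> F0; rewrite -(big_ord_narrow_cond (P := xpredT)) /=.
  rewrite [RHS]big_mkcond; apply: eq_bigr => l _ /=.
  by case: ifP => // /negbT /F0.
rewrite -Ww; apply: qI.
  by rewrite (sumW _ _ W0); under eq_bigr do rewrite Ww.
by rewrite sumW => [|l /W0 ->]; [under eq_bigr do rewrite Ww | rewrite scale0r].
Qed.

Lemma affindep_translate m (q : 'I_m -> 'rV[R]_n) x :
  aff_indep q -> aff_indep (fun i => x + q i).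
Proof.
move=> qI w w_sum; under eq_bigr do rewrite scalerDr.
by rewrite big_split /= -scaler_suml w_sum scale0r add0r; apply: qI.
Qed.

Lemma affindep_inj m (q : 'I_m -> 'rV[R]_n) : aff_indep q -> injective q.
Proof.
move=> qI i j qij; apply/eqP/negPn/negP => nij.
pose e (k l : 'I_m) : R := if l == k then 1 else 0.
have e_sum k : \sum_l e k l = 1.
  by rewrite (bigD1 k) //= /e eqxx big1 ?addr0 // => l /negbTE ->.
have e_comb k : \sum_l e k l *: q l = q k.
  by rewrite (bigD1 k) //= /e eqxx scale1r big1 ?addr0 // => l /negbTE ->; rewrite scale0r.
suff : e i i - e j i = 0 by rewrite /e eqxx (negbTE nij) subr0 => /eqP; rewrite oner_eq0.
apply: (qI (fun l => e i l - e j l)); first by rewrite sumrB !e_sum subrr.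
by under eq_bigr do rewrite scalerBl; rewrite sumrB !e_comb qij subrr.
Qed.

Lemma affindep_extend k (q : 'I_k -> 'rV[R]_n) u :
  aff_indep q -> ~ aff (range q) u -> aff_indep (extend q u).
Proof.
move=> qI qu w; rewrite !big_ord_recr /= extend_max => w_sum.
under eq_bigr do rewrite extend_widen.
set W := w ord_max in w_sum * => w_comb.
have W0 : W = 0.
  apply/eqP/negPn/negP => W0; apply: qu.
  exists k, q, (fun i => - w (widen_ord (leqnSn k) i) / W); split; first by move=> i; exists i.
  split.
    by rewrite -mulr_suml sumrN; move/eqP: w_sum; rewrite addr_eq0 => /eqP ->; rewrite opprK divff.
  apply: (scalerI W0); rewrite scaler_sumr.
  under eq_bigr do rewrite scalerA mulrCA mulfV // mulr1 scaleNr.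
  by rewrite sumrN; apply/eqP; rewrite -addr_eq0 addrC w_comb.
move: w_sum w_comb; rewrite W0 scale0r !addr0 => w_sum w_comb i.
case: (unliftP ord_max i) => [j ->|-> //].
have -> : lift ord_max j = widen_ord (leqnSn k) j by apply: val_inj; exact: lift_max j.
exact: (qI (fun j => w (widen_ord (leqnSn k) j))).
Qed.

Lemma diffmx_sub j (q : 'I_j.+1 -> 'rV[R]_n) i : (q i - q ord0 <= diffmx q)%MS.
Proof.
case: (unliftP ord0 i) => [l ->|->]; last by rewrite subrr sub0mx.
by apply: (eq_row_sub l); rewrite rowK.
Qed.

Lemma affindep_extract j (q : 'I_j.+1 -> 'rV[R]_n) m :
  (m <= (\rank (diffmx q)).+1)%N ->
  exists r : 'I_m -> 'rV[R]_n, aff_indep r /\ forall i, exists l, r i = q l.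
Proof.
move=> m_rank; set D := diffmx q; pose f := maxrankfun D.
pose r0 (i : 'I_(\rank D).+1) :=
  if unlift ord0 i is Some l then q (lift ord0 (f l)) else q ord0.
have r0I : aff_indep r0.
  apply/affindep_row_free.
  suff -> : diffmx r0 = rowsub f D by apply: maxrowsub_free.
  by apply/matrixP => i k; rewrite !mxE /r0 liftK unlift_none.
exists (fun i => r0 (widen_ord m_rank i)); split; first exact: affindep_widen.
by move=> i; rewrite /r0; case: unlift => [l|]; eexists.
Qed.

Lemma affindep_in_seq m (s : seq 'rV[R]_n) (p : 'I_m -> 'rV[R]_n) :
  aff_indep p -> (forall i, aff [set v | v \in s] (p i)) ->
  exists r : 'I_m -> 'rV[R]_n, aff_indep r /\ forall i, r i \in s.
Proof.
case: m p => [p _ _|m p pI ps]; first by exists p; split=> [w _ _ []|[]].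
case: s ps => [ps|v0 s ps].
  by case: (aff_empty (S := [set v | v \in [::]]) _ (ps ord0)).
pose q (i : 'I_(size s).+1) := nth 0 (v0 :: s) i.
have qs y : [set v | v \in v0 :: s] y -> (y - q ord0 <= diffmx q)%MS.
  move=> /= ys; have iy : (index y (v0 :: s) < (size s).+1)%N.
    by rewrite -[X in (_ < X)%N]/(size (v0 :: s)) index_mem.
  by have := diffmx_sub q (Ordinal iy); rewrite /q /= nth_index.
have := affindep_rank pI (fun i => aff_sub_span qs (ps i)).
case/affindep_extract => r [rI rq]; exists r; split=> // i.
by case: (rq i) => l ->; apply: mem_nth.
Qed.

Lemma affindep_extend_hyperplane k (q : 'I_k -> 'rV[R]_n) a b u :
  aff_indep q -> (forall i, dotp a (q i) = b) -> dotp a u != b -> aff_indep (extend q u).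
Proof.
move=> qI qab aub; apply: affindep_extend => // /(aff_dotp (a := a) (b := b)) qu.
by move/eqP: aub; apply; apply: qu => _ [i _ <-].
Qed.

Lemma affindep_delta : aff_indep (fun i : 'I_n => delta_mx 0 i : 'rV[R]_n).
Proof.
move=> w _ w_comb i; have /rowP/(_ i) := w_comb; rewrite summxE mxE => <-.
rewrite (bigD1 i) //= big1 => [|j ji]; first by rewrite !mxE !eqxx mulr1 addr0.
by rewrite !mxE eq_sym (negbTE ji) andbF mulr0.
Qed.

End AffineIndependence.

Section Dimension.
Variables (R : realType) (n : nat).
Implicit Types (S : set 'rV[R]_n) (a : 'rV[R]_n).

Lemma affdim_card S k m (p : 'I_m -> 'rV[R]_n) :
  affdim S k -> aff_indep p -> (forall i, S (p i)) -> (m <= k.+1)%N.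
Proof.
move=> [_ Sk] pI Sp; rewrite leqNgt; apply/negP => km; apply: Sk.
by exists (fun i => p (widen_ord km i)); split=> [i|]; [apply: Sp | apply: affindep_widen].
Qed.

Lemma affdim_unique S k k' : affdim S k -> affdim S k' -> k = k'.
Proof.
move=> Sk Sk'; have [[p [Sp pI]] _] := Sk; have [[p' [Sp' p'I]] _] := Sk'.
by apply/eqP; rewrite eqn_leq -ltnS (affdim_card Sk' pI Sp) -ltnS (affdim_card Sk p'I Sp').
Qed.

Lemma affdim_full S m (p : 'I_m.+1 -> 'rV[R]_n) :
  m = n -> aff_indep p -> (forall i, S (p i)) -> affdim S m.
Proof.
move=> mn pI Sp; split; first by exists p.
by case=> p' [_ /affindep_card]; rewrite mn ltnn.
Qed.

Lemma affdim_hyperplane S a b m (p : 'I_m.+1 -> 'rV[R]_n) :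
  a != 0 -> (forall x, S x -> dotp a x = b) -> m.+1 = n ->
  aff_indep p -> (forall i, S (p i)) -> affdim S m.
Proof.
move=> a0 Sab mn pI Sp; split; first by exists p.
case=> p' [Sp' p'I]; have := affindep_hyperplane_card a0 p'I (fun i => Sab _ (Sp' i)).
by rewrite -mn ltnn.
Qed.

Lemma aff_hyperplane S a b m (p : 'I_m.+1 -> 'rV[R]_n) :
  a != 0 -> (forall x, S x -> dotp a x = b) -> m.+1 = n ->
  aff_indep p -> (forall i, S (p i)) -> aff S = [set x | dotp a x = b].
Proof.
move=> a0 Sab mn pI Sp; apply/seteqP; split=> x; first exact: aff_dotp.
move=> /= axb; have pab i : dotp a (p i) = b by apply: Sab.
have [k [q [w [qp qw]]]] := affindep_hyperplane_span a0 pI pab mn axb.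
by exists k, q, w; split=> // i; have [l _ <-] := qp i.
Qed.

Lemma lin_part_hyperplane a b :
  a != 0 -> lin_part [set x | dotp a x = b] = [set v | dotp a v = 0].
Proof.
move=> a0; apply/seteqP; split=> v /=.
  by case=> y [z [/= ay [/= az ->]]]; rewrite dotpBr ay az subrr.
move=> av0; pose z := (b / dotp a a) *: a.
have az : dotp a z = b by rewrite dotpZr divfK // dotpp_eq0.
by exists (v + z), z; rewrite /= dotpDr av0 add0r az addrK.
Qed.

Lemma ray_unbounded S x p :
  p != 0 -> (forall s, 0 <= s -> S (x + s *: p)) -> ~ bounded_set S.
Proof.
move=> p0 Sray [M SM].
have [j pj] : exists j, p 0 j != 0.
  apply/existsP; apply: contraNT p0 => /existsPn pj0.
  by apply/eqP/rowP => j; rewrite mxE; apply/eqP; have := pj0 j; rewrite negbK.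
have pj_gt0 : 0 < `|p 0 j| by rewrite normr_gt0.
have xM : `|x 0 j| <= M by rewrite -[x]addr0 -(scale0r p); apply: SM; apply: Sray.
pose s := (M + `|x 0 j| + 1) / `|p 0 j|.
have s0 : 0 <= s.
  by rewrite divr_ge0 ?ltW //; have := normr_ge0 (x 0 j); lra.
have := SM _ (Sray s s0) j; rewrite !mxE.
have := ler_normB (x 0 j + s * p 0 j) (x 0 j).
rewrite addrAC subrr add0r normrM (ger0_norm s0) divfK ?gt_eqF //.
have := normr_ge0 (x 0 j); lra.
Qed.

End Dimension.

Definition polyhedron (R : realType) n (I : Type) (N : I -> 'rV[R]_n) (e : I -> R) :
  set 'rV[R]_n := [set x | forall i, dotp (N i) x <= e i].

Section Polyhedron.
Variables (R : realType) (n : nat) (I : finType).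
Variables (N : I -> 'rV[R]_n) (e : I -> R) (u : 'rV[R]_n).
Hypothesis Nu : forall i, dotp (N i) u = -1.

Local Notation P := (polyhedron N e).
Local Notation C := (polyhedron N (fun=> 0)).

Lemma polycone0 : C 0.
Proof. by move=> i; rewrite dotp0r. Qed.

Lemma polyconeZ x s : C x -> 0 <= s -> C (s *: x).
Proof. by move=> Cx s0 i; rewrite dotpZr mulr_ge0_le0. Qed.

Lemma polyhedronD x p : P x -> C p -> P (x + p).
Proof. by move=> Px Cp i; rewrite dotpDr -[e i]addr0 lerD. Qed.

Lemma polyhedron_up x s : P x -> 0 <= s -> P (x + s *: u).
Proof. by move=> Px s0 i; rewrite dotpDr dotpZr Nu mulrN1; have := Px i; lra. Qed.

Lemma N_neq0 i : N i != 0.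
Proof.
by apply: contra_eq_neq (Nu i) => ->; rewrite dotpC dotp0r eq_sym oppr_eq0 oner_eq0.
Qed.

(* Translated far enough along [u], the standard simplex lies in [C]. *)
Lemma polycone_full_dim :
  exists p : 'I_n.+1 -> 'rV[R]_n, aff_indep p /\ forall i, C (p i).
Proof.
pose t := \sum_(ij : I * 'I_n) `|N ij.1 0 ij.2|.
have t0 : 0 <= t by rewrite sumr_ge0.
pose q j := t *: u + delta_mx 0 j.
have Nq i j : dotp (N i) (q j) = N i 0 j - t.
  by rewrite dotpDr dotpZr Nu dotp_delta mulrN1 addrC.
exists (extend q (t *: u)); split.
  pose b := dotp (const_mx 1) (t *: u) + 1.
  apply: (affindep_extend_hyperplane (a := const_mx 1) (b := b)).
  - rewrite /q; apply: affindep_translate; exact: affindep_delta.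
  - by move=> j; rewrite dotpDr dotp_delta mxE.
  - by rewrite /b -subr_eq0 opprD addrA subrr sub0r oppr_eq0 oner_eq0.
move=> l i /=; rewrite /extend; case: unlift => [j|]; last first.
  by rewrite dotpZr Nu mulrN1 oppr_le0.
rewrite Nq subr_le0.
exact: (le_sum_norm (P := xpredT) (fun ij : I * 'I_n => N ij.1 0 ij.2) (i := (i, j))).
Qed.

Lemma polycone_facet E : facet C E ->
  exists a k (q : 'I_k.+1 -> 'rV[R]_n), [/\ a != 0, k.+1 = n,
    (forall x, C x -> dotp a x <= 0), E = [set x | C x /\ dotp a x = 0]
    & aff_indep q /\ forall i, E (q i)].
Proof.
case=> -[a [b [a0 [Cab ->]]]] [k [Ck Ek]].
have [p [pI Cp]] := polycone_full_dim.
have kn := affdim_unique Ck (affdim_full erefl pI Cp).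
have [[q [Eq qI]] _] := Ek.
(* a supporting hyperplane of a cone passes through the origin *)
have b0 : b = 0.
  have [Cq0 aq0] := Eq ord0.
  have := Cab _ (polyconeZ Cq0 (ler0n _ 2)); have := Cab _ polycone0.
  by rewrite dotpZr aq0 dotp0r; lra.
by subst b; exists a, k, q; split.
Qed.

Section ConeFacet.
Variables (a : 'rV[R]_n) (k : nat) (q : 'I_k.+1 -> 'rV[R]_n).
Hypotheses (a0 : a != 0) (kn : k.+1 = n) (Ca : forall x, C x -> dotp a x <= 0).
Hypotheses (qI : aff_indep q) (Cq : forall i, C (q i)) (aq : forall i, dotp a (q i) = 0).

(* [c] lies in the relative interior of the facet spanned by [q]; the
   constraints tight at [c] are those whose hyperplane contains the facet. *)
Let c := \sum_(i < k.+1) q i.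

Definition tight i := dotp (N i) c == 0.

Lemma Nc_le0 i : dotp (N i) c <= 0.
Proof. by rewrite dotp_sumr sumr_le0 // => j _; apply: Cq. Qed.

Lemma not_tight_lt0 i : ~~ tight i -> dotp (N i) c < 0.
Proof. by rewrite lt_neqAle Nc_le0 andbT. Qed.

Lemma tight_exists : exists i, tight i.
Proof.
apply/existsP; apply: contraT => /existsPn not_tight.
pose t := \sum_i `|dotp (N i) a / - dotp (N i) c|.
have Nc_lt0 i : - dotp (N i) c > 0 by rewrite oppr_gt0 not_tight_lt0.
have t1 : 0 < t + 1 by rewrite ltr_wpDl ?sumr_ge0.
have Cca : C (c + (t + 1)^-1 *: a).
  move=> i /=; rewrite dotpDr dotpZr.
  have := le_sum_norm (P := xpredT) (fun i => dotp (N i) a / - dotp (N i) c) (i := i) isT.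
  rewrite -/t ler_pdivrMr // => Nia.
  have s1 : (t + 1)^-1 * (t + 1) = 1 by rewrite mulVf ?gt_eqF.
  have := Nc_lt0 i; have : 0 < (t + 1)^-1 by rewrite invr_gt0.
  by nra.
have := Ca Cca; rewrite dotpDr dotpZr dotp_sumr big1 ?add0r => [|i _]; last exact: aq.
by rewrite pmulr_rle0 ?invr_gt0 // leNgt dotpp_gt0 a0.
Qed.

Lemma tight_parallel i : tight i -> N i = (dotp (N i) a / dotp a a) *: a.
Proof.
move=> /eqP Nic0; apply: orthogonal_parallel a0 _ => v av0.
have Nq j : dotp (N i) (q j) = 0.
  apply/eqP; rewrite -oppr_eq0; move/eqP: Nic0; rewrite dotp_sumr -oppr_eq0 -sumrN.
  rewrite psumr_eq0 => [/allP/(_ j (mem_index_enum j))|l _]; first by rewrite implyTb.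
  by rewrite oppr_ge0; apply: Cq.
apply: aff_dotp (affindep_hyperplane_span a0 qI aq kn av0) => _ [j _ <-].
exact: Nq.
Qed.

Lemma tight_eq i j : tight i -> tight j -> N i = N j.
Proof.
move=> ti tj; rewrite (tight_parallel ti) (tight_parallel tj); congr (_ *: _).
have au : dotp a u != 0.
  apply: contra_eq_neq (Nu i) => au0.
  by rewrite (tight_parallel ti) dotpZl au0 mulr0 eq_sym oppr_eq0 oner_eq0.
apply: (mulIf au); rewrite -!dotpZl -(tight_parallel ti) -(tight_parallel tj).
by rewrite !Nu.
Qed.

Lemma tight_min : exists2 i, tight i & forall j, tight j -> e i <= e j.
Proof.
have [i0 ti0] := tight_exists.
by have [i ti imin] := arg_minP e ti0; exists i.
Qed.

Local Notation face i := [set x | P x /\ dotp (N i) x = e i].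

Lemma tight_face_add i x p :
  tight i -> face i x -> C p -> dotp a p = 0 -> face i (x + p).
Proof.
move=> ti [Px Nx] Cp ap; split; first exact: polyhedronD.
by rewrite dotpDr Nx (tight_parallel ti) dotpZl ap mulr0 addr0.
Qed.

(* Move from the hyperplane of the tight constraint [i] along [c] until all
   the other constraints hold. *)
Lemma tight_face_point i : tight i -> (forall j, tight j -> e i <= e j) ->
  exists x0, face i x0.
Proof.
move=> ti imin.
have [y Ny] : exists y, dotp (N i) y = e i.
  by exists ((e i / dotp (N i) (N i)) *: N i); rewrite dotpZr divfK // dotpp_eq0 N_neq0.
pose t := \sum_(j | ~~ tight j) `|(dotp (N j) y - e j) / - dotp (N j) c|.
exists (y + t *: c); split; last by rewrite dotpDr dotpZr Ny (eqP ti) mulr0 addr0.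
move=> j /=; rewrite dotpDr dotpZr; case: (boolP (tight j)) => tj.
  by rewrite (eqP tj) mulr0 addr0 -(tight_eq ti tj) Ny imin.
have := le_sum_norm (P := fun j => ~~ tight j)
  (fun j => (dotp (N j) y - e j) / - dotp (N j) c) tj.
by rewrite -/t ler_pdivrMr ?oppr_gt0 ?not_tight_lt0 // mulrN; lra.
Qed.

Lemma tight_face_facet i x0 : tight i -> face i x0 -> facet P (face i).
Proof.
move=> ti [Px0 Nx0].
have Fq j : face i (x0 + q j) := tight_face_add ti (conj Px0 Nx0) (Cq j) (aq j).
split.
  exists (N i), (e i); split; first exact: N_neq0.
  by split=> [x Px|]; first exact: Px i.
exists k; split; last first.
  apply: (affdim_hyperplane (b := e i) (N_neq0 i) _ kn (affindep_translate qI) Fq).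
  by move=> x [].
apply: (affdim_full (p := extend (fun j => x0 + q j) (x0 + 1 *: u))) kn _ _.
  apply: (affindep_extend_hyperplane (a := N i) (b := e i)).
  - exact: affindep_translate.
  - by move=> j; case: (Fq j).
  by rewrite dotpDr dotpZr Nu Nx0 mul1r -subr_eq0 addrAC subrr add0r oppr_eq0 oner_eq0.
move=> l; rewrite /extend; case: unlift => [j|]; first by case: (Fq j).
exact: polyhedron_up.
Qed.

Lemma tight_face_unbounded i x0 :
  (1 < n)%N -> tight i -> face i x0 -> ~ bounded_set (face i).
Proof.
move=> n2 ti Fx0.
have [p [p0 Cp ap]] : exists p, [/\ p != 0, C p & dotp a p = 0].
  have : q ord0 != q ord_max.
    apply/negP => /eqP/(affindep_inj qI)/(congr1 val) /= k0.
    by move: n2; rewrite -kn -k0.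
  case: (eqVneq (q ord0) 0) => [-> q0|q0 _]; [exists (q ord_max) | exists (q ord0)].
    by split; rewrite // eq_sym.
  by split.
apply: (ray_unbounded (x := x0) p0) => s s0.
by apply: tight_face_add => //; [apply: polyconeZ | rewrite dotpZr ap mulr0].
Qed.

Lemma tight_face_lin_part i x0 : tight i -> face i x0 ->
  lin_part (aff (face i)) = lin_part (aff [set x | C x /\ dotp a x = 0]).
Proof.
move=> ti [Px0 Nx0].
have Fq j : face i (x0 + q j) := tight_face_add ti (conj Px0 Nx0) (Cq j) (aq j).
rewrite (aff_hyperplane (b := e i) (N_neq0 i) _ kn (affindep_translate qI) Fq);
  last by move=> x [].
rewrite (aff_hyperplane (b := 0) a0 _ kn qI (fun j => conj (Cq j) (aq j))); last by move=> x [].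
rewrite !lin_part_hyperplane ?N_neq0 //.
have lam0 := N_neq0 i; rewrite (tight_parallel ti) scaler_eq0 negb_or in lam0.
case/andP: lam0 => lam0 _; rewrite (tight_parallel ti).
apply/funext => v; apply/propext; rewrite /= dotpZl.
by split=> [/eqP|->]; [rewrite mulf_eq0 (negbTE lam0) => /eqP | rewrite mulr0].
Qed.

Lemma cone_facet_parallel : (1 < n)%N -> exists G, [/\ facet P G, ~ bounded_set G
  & lin_part (aff G) = lin_part (aff [set x | C x /\ dotp a x = 0])].
Proof.
move=> n2; have [i ti imin] := tight_min; have [x0 Fx0] := tight_face_point ti imin.
exists (face i); split; first exact: tight_face_facet Fx0.
  exact: tight_face_unbounded n2 ti Fx0.
exact: tight_face_lin_part Fx0.
Qed.

End ConeFacet.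

Theorem polycone_facet_parallel E : (1 < n)%N -> facet C E ->
  exists G, facet P G /\ ~ bounded_set G /\ lin_part (aff G) = lin_part (aff E).
Proof.
move=> n2 /polycone_facet [a [k [q [a0 kn Ca -> [qI Eq]]]]].
have Cq j : C (q j) by case: (Eq j).
have aq j : dotp a (q j) = 0 by case: (Eq j).
by have [G []] := cone_facet_parallel a0 kn Ca qI Cq aq n2; exists G.
Qed.

End Polyhedron.

Section Lifting.
Variables (R : realType) (d : nat).
Implicit Types (V : seq 'rV[R]_d) (x v : 'rV[R]_d).

Local Notation top := (rshift d (@ord0 0)).

Lemma dotp_lsub_top (a x : 'rV[R]_(d + 1)) :
  dotp a x = dotp (lsubmx a) (lsubmx x) + a 0 top * x 0 top.
Proof.
rewrite /dotp big_split_ord big_ord1 /=; congr (_ + _).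
by apply: eq_bigr => i _; rewrite !mxE.
Qed.

Lemma upper_half_hyperplane (N x : 'rV[R]_(d + 1)) b :
  N 0 top = -1 -> upper_half [set y | dotp N y = b] x <-> dotp N x <= b.
Proof.
have rsub_top (y : 'rV[R]_(d + 1)) : rsubmx y 0 0 = y 0 top.
  by rewrite mxE; congr (y _ (rshift d _)); apply/val_inj; case: (0 : 'I_1) => -[].
move=> Ntop; split.
  case=> y [/= Nyb [yx]]; rewrite !rsub_top; move: Nyb; rewrite !dotp_lsub_top Ntop yx.
  by lra.
move=> Nxb; exists (row_mx (lsubmx x) (\row_(i < 1) (dotp (lsubmx N) (lsubmx x) - b))).
rewrite /= !rsub_top row_mxKl dotp_lsub_top row_mxKl Ntop row_mxEr !mxE.
by move: Nxb; rewrite dotp_lsub_top Ntop; split; [lra | split=> //; lra].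
Qed.

Lemma lsubmx_liftmap v : lsubmx (liftmap v) = v.
Proof. by rewrite row_mxKl. Qed.

Lemma dotp_liftmap (a : 'rV[R]_(d + 1)) v :
  dotp a (liftmap v) = dotp (lsubmx a) v + a 0 top * dotp v v.
Proof. by rewrite dotp_lsub_top lsubmx_liftmap row_mxEr mxE. Qed.

(* The lifting turns spheres into non-vertical hyperplanes. *)
Lemma sqrdist_liftmap x c :
  dotp (x - c) (x - c) = dotp (row_mx (- 2%:R *: c) (const_mx 1)) (liftmap x) + dotp c c.
Proof. by rewrite dotp_liftmap row_mxKl row_mxEr mxE mul1r dotpZl dotp_sqrB; ring. Qed.

Lemma affindep_lsubmx k (p : 'I_k -> 'rV[R]_(d + 1)) :
  aff_indep (fun i => lsubmx (p i)) -> aff_indep p.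
Proof.
move=> pI w w_sum /(congr1 lsubmx); rewrite linear_sum linear0 => w_comb.
by apply: pI => //; rewrite -[RHS]w_comb; apply: eq_bigr => i _; rewrite linearZ.
Qed.

Lemma rank_lsubmx m (D : 'M[R]_(m, d + 1)) :
  (\rank D <= (\rank (lsubmx D)).+1)%N.
Proof.
have D_split : D = row_mx (lsubmx D) 0 + row_mx 0 (rsubmx D).
  by rewrite add_row_mx addr0 add0r hsubmxK.
rewrite {1}D_split (leq_trans (mxrankS (addmx_sub_adds (submx_refl _) (submx_refl _)))) //.
rewrite (leq_trans (mxrank_adds_leqif _ _).1) // rank_row_mx0 rank_row_0mx.
rewrite -[(\rank (lsubmx D)).+1]addn1 leq_add2l.
exact: rank_leq_col.
Qed.

Lemma lsubmx_affindep_extract k (q : 'I_k.+2 -> 'rV[R]_(d + 1)) :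
  aff_indep q ->
  exists r : 'I_k.+1 -> 'rV[R]_d, aff_indep r /\ forall i, exists j, r i = lsubmx (q j).
Proof.
move=> /affindep_row_free/eqP qrank; apply: affindep_extract.
have -> : diffmx (fun i => lsubmx (q i)) = lsubmx (diffmx q).
  by apply/matrixP => i j; rewrite !mxE.
by rewrite -[X in (X <= _)%N]qrank rank_lsubmx.
Qed.

Lemma circumcenter k (r : 'I_k.+1 -> 'rV[R]_k) :
  aff_indep r -> exists c, forall i, dotp (r i - c) (r i - c) = dotp (r ord0 - c) (r ord0 - c).
Proof.
move=> rI; set D := diffmx r.
have uD : D^T \in unitmx by rewrite unitmx_tr -row_free_unit; apply/affindep_row_free.
pose beta : 'rV[R]_k :=
  \row_i ((dotp (r (lift ord0 i)) (r (lift ord0 i)) - dotp (r ord0) (r ord0)) / 2).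
exists (beta *m invmx D^T) => i; case: (unliftP ord0 i) => [l ->|-> //].
have cD : dotp (beta *m invmx D^T) (r (lift ord0 l) - r ord0) = beta 0 l.
  rewrite -[RHS](congr1 (fun M : 'rV[R]_k => M 0 l) (mulmxKV uD beta)) mxE.
  by apply: eq_bigr => m _; rewrite !mxE.
move: cD; rewrite mxE dotpBr !dotp_sqrB => cr.
have -> : dotp (beta *m invmx D^T) (r (lift ord0 l)) = dotp (beta *m invmx D^T) (r ord0) +
   (dotp (r (lift ord0 l)) (r (lift ord0 l)) - dotp (r ord0) (r ord0)) / 2 by rewrite -cr; ring.
by field.
Qed.

Lemma vertices_affindep V : is_vertex_set V ->
  exists r : 'I_d.+1 -> 'rV[R]_d, aff_indep r /\ forall i, r i \in V.
Proof.
case=> _ [_ [[p [Vp pI]] _]].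
by apply: (affindep_in_seq pI) => i; apply: conv_sub_aff.
Qed.

Lemma vertex_off_simplex V (r : 'I_d.+1 -> 'rV[R]_d) :
  uniq V -> size V != d.+1 -> injective r -> (forall i, r i \in V) ->
  exists2 v, v \in V & forall i, r i != v.
Proof.
move=> Vu Vsize rinj rV.
have /allPn [v vV vr] : ~~ all [in codom r] V.
  apply: contra Vsize => /allP Vr.
  have rsize : size (codom r) = d.+1 by rewrite size_codom card_ord.
  rewrite eqn_leq -{1}rsize (uniq_leq_size Vu Vr) -rsize uniq_leq_size //.
    by rewrite map_inj_uniq ?enum_uniq.
  by move=> _ /codomP [i ->].
by exists v => // i; apply: contraNneq vr => <-; apply: codom_f.
Qed.

(* If the lifted vertices were affinely dependent, one vertex would lift into
   the hyperplane through the lifts of a simplex of vertices, i.e. lie on its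
   circumsphere: [d + 2] vertices on a common sphere. *)
Lemma lifting_full_dim V : (0 < d)%N -> is_vertex_set V -> generic V ->
  exists p : 'I_d.+2 -> 'rV[R]_(d + 1), aff_indep p /\ forall i, lifting V (p i).
Proof.
move=> d0 Vvert [Vgen Vsize]; have [r [rI rV]] := vertices_affindep Vvert.
have rinj := affindep_inj rI.
have [v vV vr] := vertex_off_simplex Vvert.1 Vsize rinj rV.
have [c rc] := circumcenter rI.
pose rho := dotp (r ord0 - c) (r ord0 - c).
have rho_gt0 : 0 < rho.
  rewrite lt_def dotpp_ge0 andbT; apply/negP => /eqP rho0.
  have rc0 i : r i = c by apply/eqP; rewrite -subr_eq0 -dotpp_eq0 rc -/rho rho0.
  have /(congr1 val) /= d0' := rinj ord0 ord_max (etrans (rc0 _) (esym (rc0 _))).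
  by move: d0; rewrite -d0'.
exists (extend (fun i => liftmap (r i)) (liftmap v)); split; last first.
  move=> i; apply: sub_conv; rewrite /extend; case: unlift => [j|]; last by exists v.
  by exists (r j).
apply: affindep_extend.
  apply: affindep_lsubmx.
  suff -> : (fun i => lsubmx (liftmap (r i))) = r by [].
  by apply/funext => i; rewrite lsubmx_liftmap.
move=> /(aff_dotp (a := row_mx (- 2%:R *: c) (const_mx 1)) (b := rho - dotp c c)) vrho.
have vc : dotp (v - c) (v - c) = rho.
  rewrite sqrdist_liftmap vrho ?subrK // => _ [i _ <-].
  by rewrite /rho -(rc i) sqrdist_liftmap addrK.
apply: (Vgen (extend r v)); first exact: extend_inj.
  by move=> i; rewrite /extend; case: unlift.
exists c, (Num.sqrt rho); split; first by rewrite sqrtr_gt0.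
by move=> i; rewrite sqr_sqrtr ?ltW // /extend; case: unlift.
Qed.

End Lifting.

Section LiftingFacets.
Variables (R : realType) (d : nat) (V : seq 'rV[R]_d).
Local Notation top := (rshift d (@ord0 0)).

Lemma liftingE : lifting V = conv [set y | y \in [seq liftmap v | v <- V]].
Proof.
rewrite /lifting; congr conv; apply/seteqP; split=> y /=.
  by case=> v [vV ->]; apply: map_f.
by case/mapP => v vV ->; exists v.
Qed.

Lemma lifting_lsubmx x : lifting V x -> conv [set v | v \in V] (lsubmx x).
Proof.
case=> k [p [w [Vp [w0 [w1 ->]]]]]; exists k, (fun i => lsubmx (p i)), w.
split; first by move=> i; have [v [vV ->]] := Vp i; rewrite lsubmx_liftmap.
by rewrite linear_sum; split=> //; split=> //; apply: eq_bigr => i _; rewrite linearZ.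
Qed.

Definition lift_face (m : (size V).-tuple bool) : set 'rV[R]_(d + 1) :=
  conv [set y | y \in mask m ([seq liftmap v | v <- V])].

Lemma lifting_facet_mask F : facet (lifting V) F -> exists m, F = lift_face m.
Proof.
case=> -[A [b [_ [Ab ->]]]] _.
have sz : size (map (fun v => dotp A (liftmap v) == b) V) == size V by rewrite size_map.
exists (Tuple sz); rewrite /lift_face /= -map_mask -filter_mask liftingE conv_face; last first.
  by move=> y Vy; apply: Ab; rewrite liftingE; apply: sub_conv.
congr conv; apply/seteqP; split=> y /=.
  by case=> /mapP [v vV ->] Avb; apply: map_f; rewrite mem_filter Avb eqxx.
by case/mapP => v; rewrite mem_filter => /andP [/eqP Avb vV] ->; split=> //; apply: map_f.
Qed.

Lemma lifting_face_card A b m (q : 'I_m -> 'rV[R]_(d + 1)) :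
  (forall x, lifting V x -> dotp A x <= b) -> aff_indep q ->
  (forall i, lifting V (q i) /\ dotp A (q i) = b) ->
  (m <= size [seq v <- V | dotp A (liftmap v) == b])%N.
Proof.
move=> Ab qI Fq; pose S := [seq v <- V | dotp A (liftmap v) == b].
have qS i : aff [set y | y \in [seq liftmap v | v <- S]] (q i).
  apply: conv_sub_aff.
  have : [set x | lifting V x /\ dotp A x = b] (q i) := Fq i.
  rewrite liftingE conv_face => [|y Vy]; last by apply: Ab; rewrite liftingE; apply: sub_conv.
  apply: conv_mono => _ [/mapP [v vV ->] Avb].
  by apply: map_f; rewrite mem_filter Avb eqxx.
have [r [rI rS]] := affindep_in_seq qI qS.
by rewrite -(size_map (@liftmap R d)); apply: card_inj_seq (affindep_inj rI) rS.
Qed.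

Lemma vertical_facet_projection A' b (q : 'I_d.+1 -> 'rV[R]_(d + 1)) :
  (0 < d)%N -> is_vertex_set V -> A' != 0 -> (forall v, v \in V -> dotp A' v <= b) ->
  aff_indep q -> (forall i, lifting V (q i) /\ dotp A' (lsubmx (q i)) = b) ->
  facet (conv [set v | v \in V]) [set x | conv [set v | v \in V] x /\ dotp A' x = b].
Proof.
move=> d0 Vvert A'0 Vb qI Fq; split.
  by exists A', b; split=> //; split=> // x; apply: conv_dotp_le.
exists d.-1; rewrite prednK //; split; first exact: Vvert.2.2.
have le : (d.-1.+2 <= d.+1)%N by rewrite prednK.
have [r [rI rq]] := lsubmx_affindep_extract (affindep_widen (le_m'm := le) qI).
apply: (affdim_hyperplane (b := b) A'0 _ (prednK d0) rI) => [x []//|i].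
have [j ->] := rq i; have [Lq Aq] := Fq (widen_ord le j).
by split=> //; apply: lifting_lsubmx.
Qed.

(* A vertical facet of the lifting would project onto a facet of [conv V]
   carrying at least [d + 1] vertices, which simpliciality forbids. *)
Lemma lifting_facet_nonvertical A b (q : 'I_d.+1 -> 'rV[R]_(d + 1)) :
  (0 < d)%N -> is_vertex_set V -> simplicial V -> A != 0 ->
  (forall x, lifting V x -> dotp A x <= b) ->
  aff_indep q -> (forall i, lifting V (q i) /\ dotp A (q i) = b) -> A 0 top != 0.
Proof.
move=> d0 Vvert Vsimp A0 Ab qI Fq; apply/negP => /eqP Atop.
pose A' := lsubmx A.
have A'0 : A' != 0.
  apply: contraNneq A0 => A'0; rewrite -(hsubmxK A) -/A' A'0.
  suff -> : rsubmx A = 0 by rewrite row_mx0.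
  by apply/rowP => i; rewrite ord1 !mxE Atop.
have Alift v : dotp A (liftmap v) = dotp A' v by rewrite dotp_liftmap Atop mul0r addr0.
pose S := [seq v <- V | dotp A' v == b].
have S_le : (size S <= d)%N.
  have Vb v : v \in V -> dotp A' v <= b.
    by move=> vV; rewrite -Alift; apply: Ab; rewrite liftingE; apply/sub_conv/map_f.
  have Fq' i : lifting V (q i) /\ dotp A' (lsubmx (q i)) = b.
    by have [Lq Aq] := Fq i; split=> //; rewrite -Aq dotp_lsub_top Atop mul0r addr0.
  have FP := vertical_facet_projection d0 Vvert A'0 Vb qI Fq'.
  have Suniq : uniq S by rewrite filter_uniq //; case: Vvert.
  have Sinj : injective (fun i : 'I_(size S) => nth 0 S i).
    by move=> i j /eqP; rewrite nth_uniq // => /eqP/val_inj.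
  have SV (i : 'I_(size S)) : nth 0 S i \in V /\ dotp A' (nth 0 S i) = b.
    by have := mem_nth 0 (ltn_ord i); rewrite mem_filter => /andP [/eqP].
  apply: (affindep_hyperplane_card A'0 _ (fun i => (SV i).2)).
  apply: (Vsimp _ FP _ _ Sinj) => i.
  by split; [apply: (SV i).1 | split; [apply/sub_conv/(SV i).1 | apply: (SV i).2]].
have S_ge : (d.+1 <= size S)%N.
  rewrite /S (eq_filter (a2 := fun v => dotp A (liftmap v) == b)) => [|v]; last by rewrite Alift.
  exact: lifting_face_card Ab qI Fq.
by have := leq_trans S_ge S_le; rewrite ltnn.
Qed.

Lemma lifting_facet_normal F :
  (0 < d)%N -> is_vertex_set V -> simplicial V -> generic V -> facet (lifting V) F ->
  exists (N : 'rV[R]_(d + 1)) (e : R), N 0 top = -1 /\ aff F = [set x | dotp N x = e].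
Proof.
move=> d0 Vvert Vsimp Vgen [[A [b [A0 [Ab FE]]]] [k [Lk Fk]]].
have [p [pI Lp]] := lifting_full_dim d0 Vvert Vgen.
have [kd] := affdim_unique Lk (affdim_full (esym (addn1 d)) pI Lp); subst k.
have [[q [Fq qI]] _] := Fk.
have Fq' i : lifting V (q i) /\ dotp A (q i) = b by move: (Fq i); rewrite FE.
have Atop := lifting_facet_nonvertical d0 Vvert Vsimp A0 Ab qI Fq'.
exists ((- (A 0 top)^-1) *: A), (- b / A 0 top); split; first by rewrite mxE mulNr mulVf.
apply: (aff_hyperplane (a := (- (A 0 top)^-1) *: A) (b := - b / A 0 top) _ _
  (esym (addn1 d)) qI Fq).
  by rewrite scaler_eq0 negb_or oppr_eq0 invr_eq0 Atop.
by move=> x; rewrite FE => /= -[_ Axb]; rewrite dotpZl Axb !mulNr mulrC.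
Qed.

Definition facet_mask := {m : (size V).-tuple bool | `[< facet (lifting V) (lift_face m) >]}.

(* The common shape of [Pplus V] ([H := id]) and [Tplus V] ([H := lin_part]). *)
Lemma lifting_halfspaces (N : facet_mask -> 'rV[R]_(d + 1)) (c : facet_mask -> R)
    (H : set 'rV[R]_(d + 1) -> set 'rV[R]_(d + 1)) :
  (forall i, N i 0 top = -1) ->
  (forall i, H (aff (lift_face (val i))) = [set x | dotp (N i) x = c i]) ->
  [set x | forall F, facet (lifting V) F -> upper_half (H (aff F)) x] = polyhedron N c.
Proof.
move=> Ntop NH; apply/seteqP; split=> x /= xF.
  rewrite /polyhedron /= => i; rewrite -upper_half_hyperplane // -NH.
  by apply: xF; apply/asboolP; exact: (valP i).
move=> F LF; have [m Fm] := lifting_facet_mask LF.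
have Lm : `[< facet (lifting V) (lift_face m) >] by apply/asboolP; rewrite -Fm.
by rewrite Fm (NH (exist _ m Lm)) upper_half_hyperplane.
Qed.

End LiftingFacets.

Theorem mainTheorem6 (R : realType) (d : nat) (V : seq 'rV[R]_d) :
  (2 <= d)%N ->
  is_vertex_set V -> simplicial V -> generic V ->
  forall E : set 'rV[R]_(d + 1), facet (Tplus V) E ->
  exists G : set 'rV[R]_(d + 1),
    facet (Pplus V) G /\ ~ bounded_set G /\
    lin_part (aff G) = lin_part (aff E).
Proof.
move=> d2 Vvert Vsimp Vgen E TE.
have d0 : (0 < d)%N by apply: ltnW.
have /choice [N NP] : forall i : facet_mask V, exists N : 'rV[R]_(d + 1), exists e,
    N 0 (rshift d ord0) = -1 /\ aff (lift_face (val i)) = [set x | dotp N x = e].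
  by move=> i; apply: (lifting_facet_normal d0 Vvert Vsimp Vgen); apply/asboolP; exact: (valP i).
have /choice [e eP] := NP.
have Ntop i : N i 0 (rshift d ord0) = -1 by case: (eP i).
have NPplus : Pplus V = polyhedron N e.
  by apply: (lifting_halfspaces (H := id)) => // i; case: (eP i).
have NTplus : Tplus V = polyhedron N (fun=> 0).
  apply: (lifting_halfspaces (H := @lin_part R _)) => // i.
  have [_ ->] := eP i; rewrite lin_part_hyperplane //.
  by apply: contra_eq_neq (Ntop i) => ->; rewrite mxE eq_sym oppr_eq0 oner_eq0.
rewrite NPplus; rewrite NTplus in TE.
have N_up i : dotp (N i) (delta_mx 0 (rshift d ord0)) = -1 by rewrite dotp_delta.
by apply: (polycone_facet_parallel e N_up) TE; rewrite addn1.
Qed.
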